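(* Let $d\in\mathbb{N}$ with $d\ge1$ and $\mathbf d\in\mathbb{N}^2\setminus\{(0,0)\}$. Every $\alpha\in E_d\setminus\{0\}$ admits a representation $\mathbf i=(i_1,\dots,i_s)$ with $d(\mathbf i)\le d$, $s=s_d(\alpha)$ and $i_s\le i_1+2$. Similarly, every $\alpha\in E_{\mathbf d}\setminus\{0\}$ admits a representation $\mathbf i=(i_1,\dots,i_s)$ with $(d_1(\mathbf i),d_2(\mathbf i))\le\mathbf d$ (componentwise), $s=s_{\mathbf d}(\alpha)$ and $i_s\le i_1+2$.
   Context: Let $f\colon\mathbb{Z}\to\mathbb{Z}$ be defined by $f(0)=f(1)=1$, $f(i+2)=f(i+1)+f(i)$ for all $i\in\mathbb{Z}$; $\gamma=(1+\sqrt5)/2$; $\mathbb{Z}[\gamma]=\mathbb{Z}\oplus\mathbb{Z}\gamma^{-1}$. A representation of $\alpha\in\mathbb{Z}[\gamma]$ is a finite non-decreasing sequence $\mathbf i=(i_1,\dots,i_s)$ of non-negative integers with $\alpha=\sum_k\gamma^{-i_k}$ (empty sum $=0$); $d(\mathbf i)=\sum_kf(i_k)$, $d_1(\mathbf i)=\sum_kf(i_k-2)$, $d_2(\mathbf i)=\sum_kf(i_k-1)$. $E_d$ is the set of $\alpha$ having a representation $\mathbf i$ with $d(\mathbf i)\le d$, and $s_d(\alpha)$ the largest size $s$ of such a representation; $E_{\mathbf d}$ is the set of $\alpha$ having a representation with $(d_1(\mathbf i),d_2(\mathbf i))\le\mathbf d$ componentwise, and $s_{\mathbf d}(\alpha)$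 the largest size of such a representation. *)

From Stdlib Require Import ZArith List Sorted Lia.
Import ListNotations.
Open Scope Z_scope.

(* f : Z -> Z with f(0)=f(1)=1 and f(i+2)=f(i+1)+f(i) for all i in Z. *)
Fixpoint fpos (n : nat) : Z * Z :=  (* (f n, f (n+1)) *)
  match n with
  | O => (1, 1)
  | S m => let (a, b) := fpos m in (b, a + b)
  end.
Fixpoint fneg (n : nat) : Z * Z :=  (* (f (-n), f (-n+1)) *)
  match n with
  | O => (1, 1)
  | S m => let (a, b) := fneg m in (b - a, a)
  end.
Definition f (z : Z) : Z :=
  if 0 <=? z then fst (fpos (Z.to_nat z)) else fst (fneg (Z.to_nat (- z))).

(* Z[gamma] = Z (+) Z gamma^{-1}; an element (a,b) stands for a + b*gamma^{-1}.
   Since gamma^{-2} = 1 - gamma^{-1}, multiplication by gamma^{-1} sends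
   (a,b) to (b, a - b). *)
Definition Zg := (Z * Z)%type.
Definition Zg0 : Zg := (0, 0).
Definition Zg_add (x y : Zg) : Zg := (fst x + fst y, snd x + snd y).
Fixpoint ginv_pow (i : nat) : Zg :=
  match i with
  | O => (1, 0)
  | S j => let (a, b) := ginv_pow j in (b, a - b)
  end.

Definition val (l : list nat) : Zg :=
  fold_right (fun i acc => Zg_add (ginv_pow i) acc) Zg0 l.

Definition is_rep (alpha : Zg) (l : list nat) : Prop :=
  Sorted le l /\ val l = alpha.

Definition dsum (g : Z -> Z) (l : list nat) : Z :=
  fold_right (fun i acc => g (Z.of_nat i) + acc) 0 l.
Definition d0 (l : list nat) : Z := dsum f l.
Definition d1 (l : list nat) : Z := dsum (fun i => f (i - 2)) l.
Definition d2 (l : list nat) : Z := dsum (fun i => f (i - 1)) l.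

Definition in_E (d : nat) (alpha : Zg) : Prop :=
  exists l, is_rep alpha l /\ d0 l <= Z.of_nat d.
Definition in_E2 (e1 e2 : nat) (alpha : Zg) : Prop :=
  exists l, is_rep alpha l /\ d1 l <= Z.of_nat e1 /\ d2 l <= Z.of_nat e2.

(* l has size s_d(alpha): it is admissible and of largest size among admissible reps *)
Definition has_size_sd (d : nat) (alpha : Zg) (l : list nat) : Prop :=
  forall l', is_rep alpha l' -> d0 l' <= Z.of_nat d -> (length l' <= length l)%nat.
Definition has_size_sd2 (e1 e2 : nat) (alpha : Zg) (l : list nat) : Prop :=
  forall l', is_rep alpha l' -> d1 l' <= Z.of_nat e1 -> d2 l' <= Z.of_nat e2 ->
    (length l' <= length l)%nat.

Definition spread_le2 (l : list nat) : Prop :=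
  (last l 0%nat <= hd 0%nat l + 2)%nat.

From Stdlib Require Import ZArith List Sorted Lia Permutation Mergesort Classical.
Import ListNotations.
Open Scope Z_scope.

(* Take an admissible representation (value alpha, cost bound
   respected) of maximal size, and among those one of least d-cost.  Sort it:
   if its extreme indices a <= a + k have k >= 3, the pair
   gamma^-a + gamma^-(a+k) can be rewritten, via gamma^-i = gamma^-(i+1) +
   gamma^-(i+2), as a sum of more terms whose cost does not exceed that of the
   pair (for every Fibonacci-like cost weight with nonnegative values), or,
   when k = 3, as 2 gamma^-(a+1), which has the same size but strictly smaller
   d-cost. *)

(* The costs d, d_1, d_2 are sums of weights h satisfying h(z+2) = h(z+1) + h(z);
   the pair replacements below change every such cost in the same way. *)
Definition fib_like (h : Z -> Z) : Prop := forall z, h (z + 2) = h (z + 1) + h z.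

Lemma fpos_S (n : nat) : fpos (S n) = (snd (fpos n), fst (fpos n) + snd (fpos n)).
Proof. simpl. destruct (fpos n); reflexivity. Qed.

Lemma fneg_S (n : nat) : fneg (S n) = (snd (fneg n) - fst (fneg n), fst (fneg n)).
Proof. simpl. destruct (fneg n); reflexivity. Qed.

Lemma f_of_nat (n : nat) : f (Z.of_nat n) = fst (fpos n).
Proof.
  unfold f. rewrite Nat2Z.id.
  destruct (0 <=? Z.of_nat n) eqn:E; [reflexivity | apply Z.leb_gt in E; lia].
Qed.

Lemma f_of_neg (n : nat) : f (- Z.of_nat (S n)) = fst (fneg (S n)).
Proof.
  unfold f. destruct (0 <=? - Z.of_nat (S n)) eqn:E.
  - apply Z.leb_le in E; lia.
  - do 3 f_equal. lia.
Qed.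

Lemma fib_like_f : fib_like f.
Proof.
  intro z. destruct (Z_le_gt_dec 0 z) as [Hz | Hz].
  - destruct (Z_of_nat_complete z Hz) as [n ->].
    replace (Z.of_nat n + 2) with (Z.of_nat (S (S n))) by lia.
    replace (Z.of_nat n + 1) with (Z.of_nat (S n)) by lia.
    rewrite !f_of_nat, !fpos_S. simpl. lia.
  - assert (z = -1 \/ exists n, z = - Z.of_nat (S (S n))) as [-> | [n ->]].
    { destruct (Z.eq_dec z (-1)); [left; auto | right].
      exists (Z.to_nat (- z - 2)). lia. }
    + reflexivity.
    + destruct n as [|n]; [reflexivity|].
      replace (- Z.of_nat (S (S (S n))) + 2) with (- Z.of_nat (S n)) by lia.
      replace (- Z.of_nat (S (S (S n))) + 1) with (- Z.of_nat (S (S n))) by lia.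
      rewrite !f_of_neg, (fneg_S (S (S n))), (fneg_S (S n)). simpl. lia.
Qed.

Lemma fpos_pos (n : nat) : 1 <= fst (fpos n) /\ 1 <= snd (fpos n).
Proof. induction n as [|n IH]; [simpl; lia | rewrite fpos_S; simpl; lia]. Qed.

Lemma f_pos (z : Z) : 0 <= z -> 1 <= f z.
Proof.
  intro Hz. destruct (Z_of_nat_complete z Hz) as [n ->].
  rewrite f_of_nat. apply fpos_pos.
Qed.

(* f is nonnegative from index -2 on, since f(-1) = 0 and f(-2) = 1. *)
Lemma f_nonneg (z : Z) : -2 <= z -> 0 <= f z.
Proof.
  intro Hz. destruct (Z_le_gt_dec 0 z); [pose proof (f_pos z); lia|].
  assert (z = -1 \/ z = -2) as [-> | ->] by lia; compute; congruence.
Qed.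

Lemma fib_like_shift (s : Z) : fib_like (fun z => f (z - s)).
Proof.
  intro z. replace (z + 2 - s) with (z - s + 2) by lia.
  replace (z + 1 - s) with (z - s + 1) by lia. apply fib_like_f.
Qed.

Lemma dsum_cons (h : Z -> Z) (i : nat) (l : list nat) :
  dsum h (i :: l) = h (Z.of_nat i) + dsum h l.
Proof. reflexivity. Qed.

Lemma dsum_app (h : Z -> Z) (l m : list nat) : dsum h (l ++ m) = dsum h l + dsum h m.
Proof. induction l; simpl; lia. Qed.

Lemma dsum_perm (h : Z -> Z) (l m : list nat) : Permutation l m -> dsum h l = dsum h m.
Proof. induction 1; simpl; lia. Qed.

(* Every term costs at least 1 in d, so the size is bounded by the d-cost. *)
Lemma length_le_d0 (l : list nat) : Z.of_nat (length l) <= d0 l.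
Proof.
  induction l as [|i l IH]; unfold d0 in *; simpl; [lia|].
  pose proof (f_pos (Z.of_nat i)). lia.
Qed.

(* d = d_1 + d_2, since f(i) = f(i-1) + f(i-2). *)
Lemma d1_add_d2 (l : list nat) : d1 l + d2 l = d0 l.
Proof.
  induction l as [|i l IH]; unfold d0, d1, d2 in *; simpl; [lia|].
  pose proof (fib_like_shift 2 (Z.of_nat i)) as E. cbv beta in E.
  replace (Z.of_nat i + 2 - 2) with (Z.of_nat i) in E by lia.
  replace (Z.of_nat i + 1 - 2) with (Z.of_nat i - 1) in E by lia. lia.
Qed.

Lemma Zg_ext (x y : Zg) : fst x = fst y -> snd x = snd y -> x = y.
Proof. destruct x, y; simpl; intros -> ->; reflexivity. Qed.

(* Closes a linear identity in Z[gamma], treating the coordinates of the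
   gamma^-i and of val as unknowns. *)
Ltac zg_linear := apply Zg_ext; cbn [fst snd Zg_add Zg0]; lia.

(* gamma^-i = gamma^-(i+1) + gamma^-(i+2), i.e. gamma^2 = gamma + 1. *)
Lemma ginv_pow_rec (i : nat) : ginv_pow i = Zg_add (ginv_pow (S i)) (ginv_pow (S (S i))).
Proof. simpl. destruct (ginv_pow i) as [a b]. zg_linear. Qed.

Lemma val_cons (i : nat) (l : list nat) : val (i :: l) = Zg_add (ginv_pow i) (val l).
Proof. reflexivity. Qed.

Lemma val_app (l m : list nat) : val (l ++ m) = Zg_add (val l) (val m).
Proof.
  induction l as [|i l IH]; [rewrite app_nil_l | rewrite <- app_comm_cons, !val_cons, IH];
    simpl val; zg_linear.
Qed.

Lemma val_perm (l m : list nat) : Permutation l m -> val l = val m.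
Proof. induction 1; rewrite ?val_cons; try congruence. zg_linear. Qed.

(** * Replacing the extreme pair of a representation *)

(* Pair at odd distance 2j+3: gamma^-a + gamma^-(a+2j+3) equals the sum over
   [a+1; a+3; ...; a+2j+1; a+2j+1], a list of j+2 indices whose cost is that
   of the pair minus 2 h(a). *)
Lemma odd_gap_move (j a : nat) : exists m,
  length m = (j + 2)%nat /\
  val m = Zg_add (ginv_pow a) (ginv_pow (a + 2 * j + 3)) /\
  forall h, fib_like h -> dsum h m + h (Z.of_nat a) = h (Z.of_nat (a + 2 * j + 3)).
Proof.
  revert a. induction j as [|j IH]; intro a.
  - exists [S a; S a]. split; [reflexivity|]. split.
    + replace (a + 2 * 0 + 3)%nat with (S (S (S a))) by lia.
      rewrite !val_cons, (ginv_pow_rec a), (ginv_pow_rec (S a)). simpl val. zg_linear.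
    + intros h Hh. cbn [dsum fold_right].
      pose proof (Hh (Z.of_nat a)). pose proof (Hh (Z.of_nat a + 1)).
      replace (Z.of_nat (a + 2 * 0 + 3)) with (Z.of_nat a + 1 + 2) by lia.
      replace (Z.of_nat a + 1 + 1) with (Z.of_nat a + 2) in * by lia.
      replace (Z.of_nat (S a)) with (Z.of_nat a + 1) by lia. lia.
  - destruct (IH (S (S a))) as [m [Hlen [Hval Hcost]]].
    replace (S (S a) + 2 * j + 3)%nat with (a + 2 * S j + 3)%nat in * by lia.
    exists (S a :: m). split; [simpl; lia|]. split.
    + rewrite val_cons, Hval, (ginv_pow_rec a). zg_linear.
    + intros h Hh. specialize (Hcost h Hh). pose proof (Hh (Z.of_nat a)). rewrite dsum_cons.
      replace (Z.of_nat (S (S a))) with (Z.of_nat a + 2) in Hcost by lia.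
      replace (Z.of_nat (S a)) with (Z.of_nat a + 1) by lia. lia.
Qed.

(* Even k = 2j+4 uses gamma^-a = gamma^-(a+1) + gamma^-(a+2) and the odd move
   on (a+1, a+k), keeping the cost unchanged. *)
Lemma gap_move (a k : nat) : (3 <= k)%nat -> exists m,
  val m = Zg_add (ginv_pow a) (ginv_pow (a + k)) /\
  (forall h, fib_like h -> 0 <= h (Z.of_nat a) ->
     dsum h m <= h (Z.of_nat a) + h (Z.of_nat (a + k))) /\
  ((3 <= length m)%nat \/
   (length m = 2%nat /\ forall h, fib_like h ->
      dsum h m + 2 * h (Z.of_nat a) = h (Z.of_nat a) + h (Z.of_nat (a + k)))).
Proof.
  intro Hk. destruct (Nat.Even_or_Odd k) as [[j Hj] | [j Hj]].
  - destruct (odd_gap_move (j - 2) (S a)) as [m [Hlen [Hval Hcost]]].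
    replace (S a + 2 * (j - 2) + 3)%nat with (a + k)%nat in * by lia.
    exists (S (S a) :: m). split; [|split].
    + rewrite val_cons, Hval, (ginv_pow_rec a). zg_linear.
    + intros h Hh _. specialize (Hcost h Hh). pose proof (Hh (Z.of_nat a)). rewrite dsum_cons.
      replace (Z.of_nat (S (S a))) with (Z.of_nat a + 2) by lia.
      replace (Z.of_nat (S a)) with (Z.of_nat a + 1) in Hcost by lia. lia.
    + left. simpl. lia.
  - destruct (odd_gap_move (j - 1) a) as [m [Hlen [Hval Hcost]]].
    replace (a + 2 * (j - 1) + 3)%nat with (a + k)%nat in * by lia.
    exists m. split; [exact Hval | split].
    + intros h Hh Ha. specialize (Hcost h Hh). lia.
    + destruct (Nat.eq_dec j 1) as [-> | Hj1]; [right | left; lia].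
      split; [exact Hlen | intros h Hh; specialize (Hcost h Hh); lia].
Qed.

Lemma replace_extreme_pair (a k : nat) (mid : list nat) : (3 <= k)%nat ->
  let l := a :: mid ++ [(a + k)%nat] in
  exists l', val l' = val l /\
    (forall h, fib_like h -> 0 <= h (Z.of_nat a) -> dsum h l' <= dsum h l) /\
    ((length l < length l')%nat \/ (length l' = length l /\ d0 l' < d0 l)).
Proof.
  intros Hk l. destruct (gap_move a k Hk) as [m [Hval [Hcost Hsize]]].
  assert (Hl : forall h, dsum h l = dsum h mid + (h (Z.of_nat a) + h (Z.of_nat (a + k)))).
  { intro h. unfold l. rewrite dsum_cons, dsum_app. cbn [dsum fold_right]. lia. }
  exists (mid ++ m). split; [|split].
  - unfold l. rewrite val_cons, !val_app, Hval. simpl val. zg_linear.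
  - intros h Hh Ha. rewrite dsum_app, Hl. specialize (Hcost h Hh Ha). lia.
  - unfold l. simpl length. rewrite !length_app. simpl length.
    destruct Hsize as [Hm | [Hm Hexact]]; [left; lia | right; split; [lia|]].
    unfold d0. rewrite dsum_app, Hl. specialize (Hexact f fib_like_f).
    pose proof (f_pos (Z.of_nat a)). lia.
Qed.

(** * The extremal argument *)

Lemma wide_sorted_split (l : list nat) : Sorted le l -> ~ spread_le2 l ->
  exists a k mid, (3 <= k)%nat /\ l = a :: mid ++ [(a + k)%nat].
Proof.
  intros Hsort Hwide. unfold spread_le2 in Hwide.
  destruct l as [|a rest]; [simpl in Hwide; lia|].
  destruct (exists_last (l := rest)) as [mid [b ->]]; [intros ->; simpl in Hwide; lia|].
  change (a :: mid ++ [b]) with ((a :: mid) ++ [b]) in Hwide.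
  rewrite last_last in Hwide. simpl hd in Hwide.
  exists a, (b - a)%nat, mid. split; [lia|]. do 3 f_equal.
  apply Sorted_extends in Hsort; [|intros x y z; lia].
  rewrite Forall_forall in Hsort.
  assert (a <= b)%nat by (apply Hsort, in_or_app; right; left; reflexivity). lia.
Qed.

Lemma sort_sorted (l : list nat) : Sorted le (NatSort.sort l).
Proof.
  pose proof (NatSort.Sorted_sort l) as H.
  induction H as [|x l' Hs IH Hhd]; constructor; auto.
  destruct Hhd; constructor. apply Nat.leb_le. assumption.
Qed.

Lemma bounded_max (Q : nat -> Prop) (N : nat) :
  (forall n, Q n -> (n <= N)%nat) -> (exists n, Q n) ->
  exists n, Q n /\ forall m, Q m -> (m <= n)%nat.
Proof.
  intros Hbound [n0 Hn0].
  assert (Hgap : forall K n, Q n -> (N <= n + K)%nat ->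
            exists n, Q n /\ forall m, Q m -> (m <= n)%nat).
  { induction K as [|K IH]; intros n Hn HK.
    - exists n. split; [exact Hn | intros m Hm; specialize (Hbound m Hm); lia].
    - destruct (classic (exists m, Q m /\ (n < m)%nat)) as [[m [Hm Hlt]] | Hnone].
      + apply (IH m Hm). lia.
      + exists n. split; [exact Hn|]. intros m Hm.
        apply Nat.nlt_ge. intro Hlt. apply Hnone. eauto. }
  apply (Hgap N n0 Hn0). lia.
Qed.

Section Extremal.

(* An abstract notion of admissible representation (value and cost bounds),
   invariant under reordering, of bounded size, and improvable by the pair
   replacement in the sense of replace_extreme_pair, relative to a cost. *)
Variable admissible : list nat -> Prop.
Variable cost : list nat -> nat.
Variable N : nat.

Hypothesis admissible_perm :
  forall l l', Permutation l l' -> admissible l -> admissible l'.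
Hypothesis cost_perm : forall l l', Permutation l l' -> cost l = cost l'.
Hypothesis admissible_bounded : forall l, admissible l -> (length l <= N)%nat.
Hypothesis admissible_improve : forall a k mid, (3 <= k)%nat ->
  admissible (a :: mid ++ [(a + k)%nat]) ->
  exists l', admissible l' /\
    ((length (a :: mid ++ [(a + k)%nat]) < length l')%nat \/
     (length l' = length (a :: mid ++ [(a + k)%nat]) /\
      (cost l' < cost (a :: mid ++ [(a + k)%nat]))%nat)).

Definition maximal_size (l : list nat) : Prop :=
  forall l', admissible l' -> (length l' <= length l)%nat.

Lemma exists_maximal_size : (exists l, admissible l) ->
  exists l, admissible l /\ maximal_size l.
Proof.
  intros [l0 H0].
  destruct (bounded_max (fun n => exists l, admissible l /\ length l = n) N)
    as [n [[l [Hl <-]] Hmax]].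
  - intros n [l [Hl <-]]. auto.
  - eauto.
  - exists l. split; [exact Hl | intros l' Hl'; apply Hmax; eauto].
Qed.

(* By induction on the cost: sorting a maximal-size representation keeps it
   admissible and maximal; if it is still too wide, the improvement yields a
   longer one (impossible) or a cheaper one of the same size. *)
Lemma narrow_maximal_size (l : list nat) : admissible l -> maximal_size l ->
  exists l', Sorted le l' /\ admissible l' /\ maximal_size l' /\ spread_le2 l'.
Proof.
  remember (cost l) as c eqn:Hc. revert l Hc.
  induction c as [c IH] using lt_wf_ind. intros l -> Hadm Hmax.
  pose proof (NatSort.Permuted_sort l) as Hperm.
  set (ls := NatSort.sort l) in Hperm.
  assert (Hls : admissible ls) by (eapply admissible_perm; eauto).
  assert (Hmaxs : maximal_size ls)
    by (intros l' Hl'; rewrite <- (Permutation_length Hperm); auto).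
  destruct (le_dec (last ls 0%nat) (hd 0%nat ls + 2)) as [Hnarrow | Hwide].
  { exists ls. repeat split; auto. apply sort_sorted. }
  destruct (wide_sorted_split ls (sort_sorted l) Hwide) as [a [k [mid [Hk Els]]]].
  rewrite Els in Hls, Hmaxs.
  destruct (admissible_improve a k mid Hk Hls) as [l' [Hl' [Hlonger | [Hsame Hcheaper]]]].
  - specialize (Hmaxs l' Hl'). lia.
  - rewrite <- Els, <- (cost_perm _ _ Hperm) in Hcheaper.
    apply (IH (cost l') Hcheaper l' eq_refl Hl').
    intros l'' Hl''. specialize (Hmaxs l'' Hl''). lia.
Qed.

Theorem extremal_narrow_representation : (exists l, admissible l) ->
  exists l, Sorted le l /\ admissible l /\ maximal_size l /\ spread_le2 l.
Proof.
  intro Hne. destruct (exists_maximal_size Hne) as [l [Hl Hmax]].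
  exact (narrow_maximal_size l Hl Hmax).
Qed.

End Extremal.

(* Bound d on d(i): the pair replacement does not increase d(i), because f >= 0
   on nonnegative indices, and d(i) serves as the decreasing cost. *)
Lemma narrow_rep_d (d : nat) (alpha : Zg) : in_E d alpha ->
  exists l, is_rep alpha l /\ d0 l <= Z.of_nat d /\ has_size_sd d alpha l /\ spread_le2 l.
Proof.
  intros [l0 [[_ Hv0] Hd0]].
  destruct (extremal_narrow_representation
              (fun l => val l = alpha /\ d0 l <= Z.of_nat d) (fun l => Z.to_nat (d0 l)) d)
    as [l [Hsort [[Hval Hd] [Hmax Hnarrow]]]]; eauto.
  - intros l l' Hp [Hv Hc]. unfold d0 in *.
    rewrite <- (val_perm _ _ Hp), <- (dsum_perm _ _ _ Hp). auto.
  - intros l l' Hp. unfold d0. rewrite (dsum_perm _ _ _ Hp). reflexivity.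
  - intros l [_ Hc]. pose proof (length_le_d0 l). lia.
  - intros a k mid Hk [Hv Hc].
    destruct (replace_extreme_pair a k mid Hk) as [l' [Hv' [Hdom Hgain]]].
    pose proof (Hdom f fib_like_f (f_nonneg (Z.of_nat a) ltac:(lia))) as Hd'. fold (d0 l') in Hd'.
    pose proof (length_le_d0 l').
    exists l'. split; [split; [congruence | unfold d0 in *; lia] | lia].
  - exists l. repeat split; auto. intros l' [_ Hv'] Hd'. apply Hmax. auto.
Qed.

(* Bounds (e1, e2) on (d_1(i), d_2(i)): both weights are Fibonacci-like and
   nonnegative from index -2 on; d = d_1 + d_2 bounds the size and decreases. *)
Lemma narrow_rep_dd (e1 e2 : nat) (alpha : Zg) : in_E2 e1 e2 alpha ->
  exists l, is_rep alpha l /\ d1 l <= Z.of_nat e1 /\ d2 l <= Z.of_nat e2 /\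
            has_size_sd2 e1 e2 alpha l /\ spread_le2 l.
Proof.
  intros [l0 [[_ Hv0] [H10 H20]]].
  destruct (extremal_narrow_representation
              (fun l => val l = alpha /\ d1 l <= Z.of_nat e1 /\ d2 l <= Z.of_nat e2)
              (fun l => Z.to_nat (d0 l)) (e1 + e2))
    as [l [Hsort [[Hval [H1 H2]] [Hmax Hnarrow]]]]; eauto.
  - intros l l' Hp [Hv [Hc1 Hc2]]. unfold d1, d2 in *.
    rewrite <- (val_perm _ _ Hp), <- !(dsum_perm _ _ _ Hp). auto.
  - intros l l' Hp. unfold d0. rewrite (dsum_perm _ _ _ Hp). reflexivity.
  - intros l [_ [Hc1 Hc2]]. pose proof (length_le_d0 l). pose proof (d1_add_d2 l). lia.
  - intros a k mid Hk [Hv [Hc1 Hc2]].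
    destruct (replace_extreme_pair a k mid Hk) as [l' [Hv' [Hdom Hgain]]].
    pose proof (Hdom _ (fib_like_shift 2) (f_nonneg (Z.of_nat a - 2) ltac:(lia))) as Hd1.
    pose proof (Hdom _ (fib_like_shift 1) (f_nonneg (Z.of_nat a - 1) ltac:(lia))) as Hd2.
    fold (d1 l') in Hd1. fold (d2 l') in Hd2. pose proof (length_le_d0 l').
    exists l'. split; [split; [congruence | unfold d1, d2 in *; lia] | lia].
  - exists l. repeat split; auto. intros l' [_ Hv'] H1' H2'. apply Hmax. auto.
Qed.

Theorem mainTheorem15 :
  (forall (d : nat) (alpha : Zg), (1 <= d)%nat ->
     in_E d alpha -> alpha <> Zg0 ->
     exists l, is_rep alpha l /\ (d0 l <= Z.of_nat d)%Z /\
               has_size_sd d alpha l /\ spread_le2 l)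
  /\
  (forall (e1 e2 : nat) (alpha : Zg), (e1, e2) <> (0%nat, 0%nat) ->
     in_E2 e1 e2 alpha -> alpha <> Zg0 ->
     exists l, is_rep alpha l /\ (d1 l <= Z.of_nat e1)%Z /\ (d2 l <= Z.of_nat e2)%Z /\
               has_size_sd2 e1 e2 alpha l /\ spread_le2 l).
Proof.
  split.
  - intros d alpha _ HE _. exact (narrow_rep_d d alpha HE).
  - intros e1 e2 alpha _ HE _. exact (narrow_rep_dd e1 e2 alpha HE).
Qed.
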